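(* Fix $n\in\mathbb N$. In the $q$-shuffle algebra $\mathbb V$, each of the following pairs of sets (with $i,j$ ranging over $\mathbb N$ with $i+j=n$) have the same linear span: (1) $\{G_i\star W_{-j}\}$ and $\{W_{-j}\star G_i\}$; (2) $\{G_i\star W_{j+1}\}$ and $\{W_{j+1}\star G_i\}$; (3) $\{\tilde G_i\star W_{-j}\}$ and $\{W_{-j}\star\tilde G_i\}$; (4) $\{\tilde G_i\star W_{j+1}\}$ and $\{W_{j+1}\star \tilde G_i\}$.
   Context: Let $\mathbb F$ be a field and let $q\in\mathbb F$ be nonzero and not a root of unity. Let $\mathbb V$ be the free associative $\mathbb F$-algebra on noncommuting $x,y$, with basis the words (including $1$). Juxtaposition denotes concatenation. Set $\langle x,x\rangle=\langle y,y\rangle=2$ and $\langle x,y\rangle=\langle y,x\rangle=-2$. The $q$-shuffle product $\star$ is the bilinear product determined as follows: - $1\star v=v\star 1=v$; - for nontrivial words $u=u_1\cdots u_r$ and $v=v_1\cdots v_s$, $$u\star v=u_1((u_2\cdots u_r)\star v)+v_1(u\star(v_2\cdots v_s))q^{\langle u_1,v_1\rangle+\cdots+\langle u_r,v_1\rangle}.$$ This makes $\mathbb V$ an associative algebra, the $q$-shuffle algebra. For $k\in\mathbb N$: - $W_{-k}=xyx\cdots x$ is the alternating word of length $2k+1$ beginning and ending with $x$; - $W_{k+1}=yxy\cdots y$ is the alternating word of length $2k+1$ beginning and ending with $y$; - $G_k=yxyx\cdots yx$ is the word of length $2k$; - $\tilde G_k=xyxy\cdots xy$ is the word of length $2k$;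 - $G_0=\tilde G_0=1$. *)

From mathcomp Require Import all_boot all_algebra.
Set Implicit Arguments. Unset Strict Implicit. Unset Printing Implicit Defensive.
Import GRing.Theory Num.Theory.
Local Open Scope ring_scope.

Definition letter := bool.
Definition lx : letter := false.
Definition ly : letter := true.
Definition word := seq letter.

Section QShuffle.
Variables (F : fieldType) (q : F).

(* Elements of V are represented by their coefficient function on words
   (every element we build is finitely supported). *)
Definition V := word -> F.

Definition vdelta (v : word) : V := fun w => if w == v then 1 else 0.

Definition vcons (a : letter) (f : V) : V :=
  fun w => match w with
           | b :: w' => if b == a then f w' else 0
           | [::] => 0
           end.

Definition vadd (f g : V) : V := fun w => f w + g w.
Definition vscale (c : F) (f : V) : V := fun w => c * f w.

Definition pairing (a b : letter) : int := if a == b then 2%:Z else - 2%:Z.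

Definition wpair (u : word) (b : letter) : int := \sum_(a <- u) pairing a b.

Fixpoint qsh (u v : word) {struct u} : V :=
  match u with
  | [::] => vdelta v
  | a :: u' =>
      let fix inner (v : word) : V :=
        match v with
        | [::] => vdelta (a :: u')
        | b :: v' => vadd (vcons a (qsh u' v))
                          (vscale (q ^ wpair (a :: u') b) (vcons b (inner v')))
        end
      in inner v
  end.

Definition in_span (f : V) (gs : seq V) : Prop :=
  exists c : nat -> F,
    forall w, f w = \sum_(k < size gs) c k * nth (fun _ => 0) gs k w.

Definition same_span (fs gs : seq V) : Prop :=
  (forall k, (k < size fs)%N -> in_span (nth (fun _ => 0) fs k) gs) /\
  (forall k, (k < size gs)%N -> in_span (nth (fun _ => 0) gs k) fs).

End QShuffle.

Definition Gw (k : nat) : word := flatten (nseq k [:: ly; lx]).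
Definition tGw (k : nat) : word := flatten (nseq k [:: lx; ly]).
(* W_{-k} = xyx...x, W_{k+1} = yxy...y, both of length 2k+1 *)
Definition Wneg (k : nat) : word := lx :: Gw k.
Definition Wpos (k : nat) : word := ly :: tGw k.

Definition not_root_of_unity (F : fieldType) (q : F) : Prop :=
  q != 0 /\ forall k : nat, (0 < k)%N -> q ^+ k != 1.

From mathcomp Require Import all_boot all_algebra.
From mathcomp Require Import ring zify.
From Stdlib Require Import FunctionalExtensionality.
Set Implicit Arguments. Unset Strict Implicit. Unset Printing Implicit Defensive.
Import GRing.Theory.
Local Open Scope ring_scope.

(* Fix a letter a, let a' be the other one, and put G_i = (a' a)^i, W_j = a G_j.
   Peeling off first letters with the defining recursion gives, for i > 0,
     G_i * W_j = a (G_i * G_j) + a' (W_{i-1} * W_j),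
     W_j * G_i = a (G_j * G_i) + q^-2 a' (W_j * W_{i-1}),
   and a joint induction on i + j shows that the G's commute with each other, and so
   do the W's.  Hence for i + j = n both families have the form A_i + c B_i (c = 1,
   resp. c = q^-2) with A_{n-i} = A_i, B_{n-i} = B_{i+1} and B_0 = 0; as long as
   c != 0, the span of such a family contains A_0, B_1, A_1, B_2, ... in turn.
   This gives (1) and (4).  Reversing words is an anti-automorphism of the q-shuffle
   product which exchanges G_i and tG_i and fixes every W_j, so it turns (1) and (4)
   into (3) and (2). *)

Section WordOperators.
Variable F : fieldType.
Implicit Types (f g : V F) (a b c : letter) (v w : word).

Definition vrev f : V F := fun w => f (rev w).

Definition vsnoc a f : V F := vrev (vcons a (vrev f)).

Lemma vrevK : involutive vrev.
Proof. by move=> f; apply: functional_extensionality => w; rewrite /vrev revK. Qed.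

Lemma vrev_delta v : vrev (vdelta F v) = vdelta F (rev v).
Proof.
by apply: functional_extensionality => w; rewrite /vrev /vdelta (can2_eq revK revK).
Qed.

Lemma vrev_vsnoc a f : vrev (vsnoc a f) = vcons a (vrev f).
Proof. by rewrite /vsnoc vrevK. Qed.

Lemma vsnoc_rcons a f w c : vsnoc a f (rcons w c) = if c == a then f w else 0.
Proof. by rewrite /vsnoc /vrev rev_rcons /= revK. Qed.

Lemma vconsD a f g : vcons a (vadd f g) = vadd (vcons a f) (vcons a g).
Proof.
apply: functional_extensionality => -[|c w]; rewrite /vadd /= ?addr0 //.
by case: (c == a); rewrite ?addr0.
Qed.

Lemma vconsZ a k f : vcons a (vscale k f) = vscale k (vcons a f).
Proof.
apply: functional_extensionality => -[|c w]; rewrite /vscale /= ?mulr0 //.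
by case: (c == a); rewrite ?mulr0.
Qed.

Lemma vrevD f g : vrev (vadd f g) = vadd (vrev f) (vrev g).
Proof. by []. Qed.

Lemma vrevZ k f : vrev (vscale k f) = vscale k (vrev f).
Proof. by []. Qed.

Lemma vsnocD a f g : vsnoc a (vadd f g) = vadd (vsnoc a f) (vsnoc a g).
Proof. by rewrite /vsnoc vrevD vconsD. Qed.

Lemma vsnocZ a k f : vsnoc a (vscale k f) = vscale k (vsnoc a f).
Proof. by rewrite /vsnoc vrevZ vconsZ. Qed.

Lemma vcons_delta a v : vcons a (vdelta F v) = vdelta F (a :: v).
Proof.
apply: functional_extensionality => -[|c w] //=.
by rewrite /vdelta eqseq_cons; case: (c == a).
Qed.

Lemma vsnoc_delta a v : vsnoc a (vdelta F v) = vdelta F (rcons v a).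
Proof. by rewrite /vsnoc vrev_delta vcons_delta vrev_delta rev_cons revK. Qed.

Lemma vsnoc_vcons a b f : vsnoc a (vcons b f) = vcons b (vsnoc a f).
Proof.
apply: functional_extensionality => -[|c w] //=.
case/lastP: w => [|w d].
  by rewrite /vsnoc /vrev /=; case: (c == a); case: (c == b).
by rewrite -rcons_cons !vsnoc_rcons /=; case: (d == a); case: (c == b).
Qed.

Lemma vscaleD k f g : vscale k (vadd f g) = vadd (vscale k f) (vscale k g).
Proof. by apply: functional_extensionality => w; rewrite /vscale /vadd mulrDr. Qed.

Lemma vscaleA k l f : vscale k (vscale l f) = vscale (k * l) f.
Proof. by apply: functional_extensionality => w; rewrite /vscale mulrA. Qed.

Lemma vscale1 f : vscale 1 f = f.
Proof. by apply: functional_extensionality => w; rewrite /vscale mul1r. Qed.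

End WordOperators.

Ltac vnorm := rewrite ?vconsD ?vconsZ ?vsnocD ?vsnocZ ?vsnoc_vcons
  ?vscaleD ?vscaleA ?vcons_delta ?vsnoc_delta ?rcons_cons.
(* Rewriting under [vcons] would otherwise unfold [qsh] on concrete words. *)
Ltac freeze_qsh :=
  repeat match goal with |- context [qsh ?q ?u ?v] => generalize (qsh q u v); intro end.
Ltac vring := apply: functional_extensionality => ?; rewrite /vadd /vscale; ring.

Lemma pairingC a b : pairing a b = pairing b a.
Proof. by rewrite /pairing eq_sym. Qed.

Lemma wpair_nil b : wpair [::] b = 0.
Proof. by rewrite /wpair big_nil. Qed.

Lemma wpair_cons a u b : wpair (a :: u) b = pairing a b + wpair u b.
Proof. by rewrite /wpair big_cons. Qed.

Lemma wpair_rcons u a b : wpair (rcons u a) b = wpair u b + pairing a b.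
Proof. by rewrite /wpair -cats1 big_cat big_seq1. Qed.

Lemma wpair_rev u b : wpair (rev u) b = wpair u b.
Proof. by rewrite /wpair big_rev. Qed.

Section QShuffleReversal.
Variables (F : fieldType) (q : F).

Lemma qsh_nil_l v : qsh q [::] v = vdelta F v.
Proof. by []. Qed.

Lemma qsh_nil_r u : qsh q u [::] = vdelta F u.
Proof. by case: u. Qed.

Lemma qsh_cons a u b v :
  qsh q (a :: u) (b :: v) =
  vadd (vcons a (qsh q u (b :: v)))
       (vscale (q ^ wpair (a :: u) b) (vcons b (qsh q (a :: u) v))).
Proof. by []. Qed.

Hypothesis q_neq0 : q != 0.

Ltac wnorm := rewrite ?wpair_cons ?wpair_rcons ?wpair_nil ?addr0 ?expfzDr //.

Lemma qsh_rcons u v a b :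
  qsh q (rcons u a) (rcons v b) =
  vadd (vscale (q ^ wpair (rcons v b) a) (vsnoc a (qsh q u (rcons v b))))
       (vsnoc b (qsh q (rcons u a) v)).
Proof.
elim: u v => [|c u IHu] v.
  change (rcons [::] a) with [:: a]; elim: v => [|d v IHv].
    change (rcons [::] b) with [:: b].
    rewrite qsh_cons !qsh_nil_l !qsh_nil_r; vnorm; wnorm.
    by rewrite (pairingC b a); vring.
  rewrite rcons_cons !qsh_cons IHv !qsh_nil_l; vnorm; vnorm; wnorm.
  by rewrite (pairingC d a); vring.
elim: v => [|d v IHv].
  change (rcons [::] b) with [:: b].
  rewrite rcons_cons !qsh_cons (IHu [::]) !qsh_nil_r; vnorm; vnorm; wnorm.
  by rewrite (pairingC b a); vring.
have IHu' := IHu (d :: v); rewrite !rcons_cons in IHu' IHv.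
rewrite !rcons_cons !qsh_cons IHu' IHv; vnorm; vnorm; wnorm.
by rewrite (pairingC d a); vring.
Qed.

Lemma qsh_rev u v : qsh q (rev u) (rev v) = vrev (qsh q v u).
Proof.
elim/last_ind: u v => [|u a IHu] v; first by rewrite qsh_nil_l qsh_nil_r vrev_delta.
elim/last_ind: v => [|v b IHv]; first by rewrite qsh_nil_l qsh_nil_r vrev_delta.
rewrite !rev_rcons qsh_cons -(rev_rcons v b) -(rev_rcons u a) IHu IHv qsh_rcons.
by rewrite vrevD vrevZ !vrev_vsnoc wpair_rev; vring.
Qed.

End QShuffleReversal.

Lemma rcons_alt (x y : letter) i :
  rcons (flatten (nseq i [:: x; y])) x = x :: flatten (nseq i [:: y; x]).
Proof. by elim: i => [//|i IH] /=; rewrite IH. Qed.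

Lemma rev_alt (x y : letter) i :
  rev (flatten (nseq i [:: x; y])) = flatten (nseq i [:: y; x]).
Proof.
elim: i => [//|i IH]; rewrite [LHS]/= !rev_cons IH rcons_alt.
by rewrite rcons_cons rcons_alt.
Qed.

(* [Galt lx i] is G_i and [Galt ly i] is tG_i; [Walt lx j] is W_{-j} and
   [Walt ly j] is W_{j+1}. *)
Definition Galt (a : letter) (i : nat) : word := flatten (nseq i [:: ~~ a; a]).
Definition Walt (a : letter) (i : nat) : word := a :: Galt a i.

Lemma GaltS a i : Galt a i.+1 = ~~ a :: Walt a i.
Proof. by []. Qed.

Lemma rev_Galt a i : rev (Galt a i) = Galt (~~ a) i.
Proof. by rewrite /Galt rev_alt negbK. Qed.

Lemma rev_Walt a i : rev (Walt a i) = Walt a i.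
Proof. by rewrite /Walt rev_cons rev_Galt /Galt negbK rcons_alt. Qed.

Lemma wpair_Galt a i b : wpair (Galt a i) b = 0.
Proof.
elim: i => [|i IH]; first exact: wpair_nil.
by rewrite GaltS !wpair_cons IH addr0 /pairing; case: a {IH}; case: b.
Qed.

Lemma wpair_Walt a i : wpair (Walt a i) a = 2%:Z.
Proof. by rewrite wpair_cons wpair_Galt addr0 /pairing eqxx. Qed.

Lemma wpair_Walt_neg a i : wpair (Walt a i) (~~ a) = - 2%:Z.
Proof. by rewrite wpair_cons wpair_Galt addr0 /pairing; case: a. Qed.

Section AlternatingShuffles.
Variables (F : fieldType) (q : F) (a : letter).

Lemma qsh_GaltS_Walt i j :
  qsh q (Galt a i.+1) (Walt a j) =
  vadd (vcons (~~ a) (qsh q (Walt a i) (Walt a j)))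
       (vcons a (qsh q (Galt a i.+1) (Galt a j))).
Proof. by rewrite {1}GaltS qsh_cons -GaltS wpair_Galt expr0z vscale1. Qed.

Lemma qsh_Walt_GaltS i j :
  qsh q (Walt a j) (Galt a i.+1) =
  vadd (vcons a (qsh q (Galt a j) (Galt a i.+1)))
       (vscale (q ^ (- 2%:Z)) (vcons (~~ a) (qsh q (Walt a j) (Walt a i)))).
Proof. by rewrite {1}GaltS qsh_cons -GaltS wpair_Walt_neg. Qed.

Lemma qsh_GaltS_GaltS i j :
  qsh q (Galt a i.+1) (Galt a j.+1) =
  vadd (vcons (~~ a) (qsh q (Walt a i) (Galt a j.+1)))
       (vcons (~~ a) (qsh q (Galt a i.+1) (Walt a j))).
Proof. by rewrite !GaltS qsh_cons -!GaltS wpair_Galt expr0z vscale1. Qed.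

Lemma qsh_Walt_Walt i j :
  qsh q (Walt a i) (Walt a j) =
  vadd (vcons a (qsh q (Galt a i) (Walt a j)))
       (vscale (q ^ 2%:Z) (vcons a (qsh q (Walt a i) (Galt a j)))).
Proof. by rewrite qsh_cons wpair_Walt. Qed.

Lemma qsh_Galt0_l v : qsh q (Galt a 0) v = vdelta F v.
Proof. by []. Qed.

Lemma qsh_Galt0_r u : qsh q u (Galt a 0) = vdelta F u.
Proof. exact: qsh_nil_r. Qed.

Hypothesis q_neq0 : q != 0.

Lemma qsh_Galt_Walt_comm s i j : (i + j <= s)%N ->
  qsh q (Galt a i) (Galt a j) = qsh q (Galt a j) (Galt a i) /\
  qsh q (Walt a i) (Walt a j) = qsh q (Walt a j) (Walt a i).
Proof.
have q2K : q ^ 2%:Z * q ^ (- 2%:Z) = 1 by rewrite -expfzDr // addrN expr0z.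
elim: s i j => [|s IH] i j hij; first by have [-> ->] : i = 0%N /\ j = 0%N by lia.
have commG : qsh q (Galt a i) (Galt a j) = qsh q (Galt a j) (Galt a i).
  case: i j hij => [|i] [|j] hij; rewrite ?qsh_Galt0_l ?qsh_Galt0_r //.
  rewrite !qsh_GaltS_GaltS !qsh_Walt_GaltS !qsh_GaltS_Walt.
  rewrite (IH j i.+1 ltac:(lia)).1 (IH j.+1 i ltac:(lia)).1 (IH j i ltac:(lia)).2.
  by freeze_qsh; vnorm; vring.
split=> //.
have commW0 k : (k <= s.+1)%N ->
    qsh q (Walt a 0) (Walt a k) = qsh q (Walt a k) (Walt a 0).
  case: k => [//|k] hk.
  rewrite (qsh_Walt_Walt 0) (qsh_Walt_Walt k.+1) qsh_Walt_GaltS qsh_GaltS_Walt.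
  rewrite !qsh_Galt0_l !qsh_Galt0_r (IH 0%N k ltac:(lia)).2.
  by freeze_qsh; vnorm; rewrite q2K vscale1; vring.
case: i j hij commG => [|i] [|j] hij commG //.
- exact: commW0.
- by symmetry; apply: commW0; lia.
rewrite !qsh_Walt_Walt !qsh_GaltS_Walt !qsh_Walt_GaltS.
rewrite (IH j i.+1 ltac:(lia)).2 (IH j.+1 i ltac:(lia)).2 -commG.
by freeze_qsh; vnorm; rewrite q2K vscale1; vring.
Qed.

Lemma qsh_GaltC i j : qsh q (Galt a i) (Galt a j) = qsh q (Galt a j) (Galt a i).
Proof. exact: (qsh_Galt_Walt_comm (leqnn (i + j))).1. Qed.

Lemma qsh_WaltC i j : qsh q (Walt a i) (Walt a j) = qsh q (Walt a j) (Walt a i).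
Proof. exact: (qsh_Galt_Walt_comm (leqnn (i + j))).2. Qed.

End AlternatingShuffles.

Section Spans.
Variable F : fieldType.
Implicit Types (f g : V F) (gs : seq (V F)).

Lemma in_span_ext f g gs : (forall w, f w = g w) -> in_span g gs -> in_span f gs.
Proof. by move=> e [c hc]; exists c => w; rewrite e hc. Qed.

Lemma in_span_add f g gs : in_span f gs -> in_span g gs -> in_span (vadd f g) gs.
Proof.
move=> [c hc] [d hd]; exists (fun k => c k + d k) => w.
by rewrite /vadd hc hd -big_split; apply: eq_bigr => i _; rewrite mulrDl.
Qed.

Lemma in_span_scale k f gs : in_span f gs -> in_span (vscale k f) gs.
Proof.
move=> [c hc]; exists (fun j => k * c j) => w.
by rewrite /vscale hc mulr_sumr; apply: eq_bigr => i _; rewrite mulrA.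
Qed.

Lemma in_span_nth gs i : (i < size gs)%N -> in_span (nth (fun _ => 0) gs i) gs.
Proof.
move=> hi; exists (fun j => (j == i)%:R) => w.
rewrite (bigD1 (Ordinal hi)) //= eqxx mul1r big1 ?addr0 // => j ji.
by have /negbTE -> : (j : nat) != i := ji; rewrite mul0r.
Qed.

Lemma same_span_sym fs gs : same_span fs gs -> same_span gs fs.
Proof. by case. Qed.

Lemma same_span_vrev fs gs :
  same_span fs gs -> same_span (map (@vrev F) fs) (map (@vrev F) gs).
Proof.
have vrev_span f hs : in_span f hs -> in_span (vrev f) (map (@vrev F) hs).
  move=> [c hc]; exists c => w; rewrite /vrev hc size_map.
  by apply: eq_bigr => i _; rewrite (nth_map (fun _ => 0)).
case=> hf hg; split=> k; rewrite size_map => hk; rewrite (nth_map (fun _ => 0)) //.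
  exact/vrev_span/hf.
exact/vrev_span/hg.
Qed.

End Spans.

Section TwistedFamilies.
Variables (F : fieldType) (n : nat) (a b : nat -> V F).
Hypothesis b0 : forall w, b 0%N w = 0.
Hypothesis a_sym : forall i, (i <= n)%N -> a (n - i)%N = a i.
Hypothesis b_sym : forall i, (i < n)%N -> b (n - i)%N = b i.+1.

Let twisted (c : F) := [seq vadd (a i) (vscale c (b i)) | i <- iota 0 n.+1].

Lemma nth_twisted c i : (i <= n)%N ->
  nth (fun _ => 0) (twisted c) i = vadd (a i) (vscale c (b i)).
Proof. by move=> hi; rewrite (nth_map 0%N) ?size_iota // nth_iota. Qed.

Lemma twisted_in_span c i : (i <= n)%N ->
  in_span (vadd (a i) (vscale c (b i))) (twisted c).
Proof.
by move=> hi; rewrite -nth_twisted //; apply: in_span_nth; rewrite size_map size_iota.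
Qed.

(* The symmetries let one peel off [a k] and [b k.+1] alternately, from [b 0 = 0]. *)
Lemma twisted_parts_in_span c : c != 0 -> forall k, (k <= n)%N ->
  in_span (a k) (twisted c) /\ in_span (b k) (twisted c).
Proof.
move=> c_neq0; elim=> [|k IH] hk.
  have e0 := twisted_in_span c hk.
  split; first by apply: in_span_ext e0 => w; rewrite /vadd /vscale b0 mulr0 addr0.
  by apply: in_span_ext (in_span_scale 0 e0) => w; rewrite b0 /vscale mul0r.
have [ha _] := IH (ltnW hk).
have hb : in_span (b k.+1) (twisted c).
  have hnk := twisted_in_span c (leq_subr k n).
  apply: in_span_ext (in_span_scale c^-1 (in_span_add hnk (in_span_scale (-1) ha))) => w.
  by rewrite -b_sym // /vadd /vscale a_sym ?(ltnW hk) //; field.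
split=> //.
apply: in_span_ext (in_span_add (twisted_in_span c hk) (in_span_scale (- c) hb)) => w.
by rewrite /vadd /vscale; ring.
Qed.

Lemma same_span_twisted c d : c != 0 -> d != 0 -> same_span (twisted c) (twisted d).
Proof.
move=> c_neq0 d_neq0.
split=> k; rewrite size_map size_iota ltnS => hk; rewrite nth_twisted //.
  have [ha hb] := twisted_parts_in_span d_neq0 hk.
  exact: in_span_add ha (in_span_scale c hb).
have [ha hb] := twisted_parts_in_span c_neq0 hk.
exact: in_span_add ha (in_span_scale d hb).
Qed.

End TwistedFamilies.

Section AlternatingSpans.
Variables (F : fieldType) (q : F).
Hypothesis q_neq0 : q != 0.

Lemma same_span_Galt_Walt_same a n :
  same_span [seq qsh q (Galt a i) (Walt a (n - i)) | i <- iota 0 n.+1]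
            [seq qsh q (Walt a (n - i)) (Galt a i) | i <- iota 0 n.+1].
Proof.
pose A i := vcons a (qsh q (Galt a i) (Galt a (n - i))).
pose B i := if i is k.+1 then vcons (~~ a) (qsh q (Walt a k) (Walt a (n - i)))
            else fun _ : word => 0 : F.
have -> : [seq qsh q (Galt a i) (Walt a (n - i)) | i <- iota 0 n.+1] =
          [seq vadd (A i) (vscale 1 (B i)) | i <- iota 0 n.+1].
  apply: eq_map => -[|i]; last by rewrite qsh_GaltS_Walt /A /B; vring.
  by rewrite /A /B subn0 !qsh_Galt0_l vcons_delta -/(Walt a n); vring.
have -> : [seq qsh q (Walt a (n - i)) (Galt a i) | i <- iota 0 n.+1] =
          [seq vadd (A i) (vscale (q ^ (- 2%:Z)) (B i)) | i <- iota 0 n.+1].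
  apply: eq_map => -[|i]; last first.
    rewrite qsh_Walt_GaltS.
    by rewrite (qsh_GaltC _ q_neq0 (n - i.+1)) (qsh_WaltC _ q_neq0 (n - i.+1)).
  by rewrite /A /B subn0 qsh_Galt0_l qsh_Galt0_r vcons_delta -/(Walt a n); vring.
apply: same_span_twisted; rewrite ?oner_neq0 ?expfz_neq0 //.
- by move=> i hi; rewrite /A subKn // qsh_GaltC.
- move=> i hi; rewrite -(subnSK hi) /B; cbv beta iota.
  by rewrite (subnSK hi) subKn 1?ltnW // qsh_WaltC.
Qed.

Lemma same_span_Galt_Walt a b n :
  same_span [seq qsh q (Galt b i) (Walt a (n - i)) | i <- iota 0 n.+1]
            [seq qsh q (Walt a (n - i)) (Galt b i) | i <- iota 0 n.+1].
Proof.
have [->|->] : b = a \/ b = ~~ a by case: a; case: b; [left | right | right | left].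
  exact: same_span_Galt_Walt_same.
have revGW j k :
    qsh q (Galt (~~ a) j) (Walt a k) = vrev (qsh q (Walt a k) (Galt a j)).
  by rewrite -qsh_rev // rev_Galt rev_Walt.
have revWG j k :
    qsh q (Walt a k) (Galt (~~ a) j) = vrev (qsh q (Galt a j) (Walt a k)).
  by rewrite -qsh_rev // rev_Galt rev_Walt.
rewrite (eq_map (fun i => revGW i (n - i)%N)) (eq_map (fun i => revWG i (n - i)%N)).
by rewrite !map_comp; apply/same_span_vrev/same_span_sym/same_span_Galt_Walt_same.
Qed.

End AlternatingSpans.

Theorem proposition6p2 (F : fieldType) (q : F) (hq : not_root_of_unity q)
    (n : nat) :
  let I := iota 0 n.+1 in
  same_span [seq qsh q (Gw i) (Wneg (n - i)) | i <- I]
            [seq qsh q (Wneg (n - i)) (Gw i) | i <- I] /\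
  same_span [seq qsh q (Gw i) (Wpos (n - i)) | i <- I]
            [seq qsh q (Wpos (n - i)) (Gw i) | i <- I] /\
  same_span [seq qsh q (tGw i) (Wneg (n - i)) | i <- I]
            [seq qsh q (Wneg (n - i)) (tGw i) | i <- I] /\
  same_span [seq qsh q (tGw i) (Wpos (n - i)) | i <- I]
            [seq qsh q (Wpos (n - i)) (tGw i) | i <- I].
Proof.
case: hq => q_neq0 _ /=.
split; first exact: (same_span_Galt_Walt q_neq0 lx lx n).
split; first exact: (same_span_Galt_Walt q_neq0 ly lx n).
split; first exact: (same_span_Galt_Walt q_neq0 lx ly n).
exact: (same_span_Galt_Walt q_neq0 ly ly n).
Qed.
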